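(* Let $\mathcal A=\{A_i\}_{i\in\Lambda}$ be a finite collection of $SL_2(\mathbb R)$ matrices with a strictly invariant multicone $U\subset[0,\pi)$, and let $\Phi=\{\varphi_i\}_{i\in\Lambda}$, $\varphi_i=\varphi_{A_i}$, be the induced IFS. Let $c>0$, $\lambda>1$ be constants with $\|A_{\mathbf i}\|\ge c\lambda^n$ for all $\mathbf i\in\Lambda^n$, $n\in\mathbb N$ (such constants exist). Then: (i) (Bounded distortion) there exists $C'>1$ such that $\frac1{C'}\le\frac{|\varphi_{\mathbf i}'(x)|}{|\varphi_{\mathbf i}'(y)|}\le C'$ for all $x,y\in\overline U$, $\mathbf i\in\Lambda^n$, $n\in\mathbb N$; (ii) there exists $C''>0$ such that $\|\varphi_{\mathbf i}'\|_{\overline U}\le C''\lambda^{-2n}$ for all $\mathbf i\in\Lambda^n$, $n\in\mathbb N$; in particular $\Phi^k$ is contractive on $U$ in the metric of $\mathbb R/\pi\mathbb Z$ for all sufficiently large $k$; (iii) $s=s_{\mathcal A}/2$, where $s$ is the solution of $P_\Phi(s)=0$ and $s_{\mathcal A}$ is the critical exponent.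
   Context: $\mathbb{RP}^1$ is identified with $[0,\pi)\cong\mathbb R/\pi\mathbb Z$ with its metric; $\varphi_A$ is the induced action of $A$ and derivatives are taken in this coordinate. A multicone is a proper nonempty open subset of $\mathbb{RP}^1$ with finitely many components having pairwise disjoint closures; it is strictly invariant if $\varphi_i(\overline U)\subset U$ for all $i$. For $\mathbf i=i_1\ldots i_n$, $A_{\mathbf i}=A_{i_1}\cdots A_{i_n}$ and $\varphi_{\mathbf i}=\varphi_{i_1}\circ\cdots\circ\varphi_{i_n}$; $\|\cdot\|_{\overline U}$ is the sup norm on $\overline U$. Pressure: $P_\Phi(t)=\lim_n\frac1n\log\sum_{\mathbf i\in\Lambda^n}\|\varphi_{\mathbf i}'\|_{\overline U}^t$. Critical exponent: $s_{\mathcal A}=\sup\{t\ge0:\sum_{n\ge1}\sum_{\mathbf i\in\Lambda^n}\|A_{\mathbf i}\|^{-t}=\infty\}$. *)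

From Stdlib Require Import Reals Lra List.
From Coquelicot Require Import Coquelicot.
Import ListNotations.
Open Scope R_scope.

Record mat2 := Mat2 { a11 : R; a12 : R; a21 : R; a22 : R }.

Definition det2 (A : mat2) : R := a11 A * a22 A - a12 A * a21 A.

Definition mmul (A B : mat2) : mat2 :=
  Mat2 (a11 A * a11 B + a12 A * a21 B) (a11 A * a12 B + a12 A * a22 B)
       (a21 A * a11 B + a22 A * a21 B) (a21 A * a12 B + a22 A * a22 B).

Definition mid : mat2 := Mat2 1 0 0 1.

Definition apply_x (A : mat2) (t : R) : R := a11 A * cos t + a12 A * sin t.
Definition apply_y (A : mat2) (t : R) : R := a21 A * cos t + a22 A * sin t.

Definition opnorm (A : mat2) : R :=
  real (Lub_Rbar (fun r => exists t, r = sqrt (apply_x A t ^ 2 + apply_y A t ^ 2))).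

(** angle in [0, pi) of the line spanned by (x, y) *)
Definition line_angle (x y : R) : R :=
  if Req_EM_T x 0 then PI / 2
  else let a := atan (y / x) in if Rlt_dec a 0 then a + PI else a.

(** the induced action phi_A on RP^1 = [0,pi) = R / pi Z (defined on all of R) *)
Definition phiA (A : mat2) (t : R) : R := line_angle (apply_x A t) (apply_y A t).

(** representative of d modulo pi in [-pi/2, pi/2) (signed displacement in R/piZ) *)
Definition wrapd (d : R) : R := d - PI * IZR (up (d / PI - / 2)).

(** derivative of a self-map f of R/piZ at t, in the coordinate of R/piZ *)
Definition dcirc (f : R -> R) (t : R) : R :=
  Derive (fun h => wrapd (f (t + h) - f t)) 0.

(** words over Lambda = {0,...,m-1} *)
Definition is_word (m n : nat) (w : list nat) : Prop :=
  length w = n /\ List.Forall (fun i => (i < m)%nat) w.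

Fixpoint all_words (m n : nat) : list (list nat) :=
  match n with
  | O => [ [] ]
  | S n' => concat (map (fun i => map (cons i) (all_words m n')) (seq 0 m))
  end.

Definition sum_words (m n : nat) (f : list nat -> R) : R :=
  fold_right Rplus 0 (map f (all_words m n)).

Definition matw (A : nat -> mat2) (w : list nat) : mat2 :=
  fold_right (fun i M => mmul (A i) M) mid w.

Definition phiw (A : nat -> mat2) (w : list nat) : R -> R :=
  fold_right (fun i g => fun t => phiA (A i) (g t)) (fun t => t) w.

(** multicone (as a pi-periodic subset of R): a nonempty proper union of finitely
    many open arcs of R/piZ whose closures are pairwise disjoint *)
Definition in_arc (a b x : R) : Prop := exists z : Z, a < x + IZR z * PI < b.
Definition in_carc (a b x : R) : Prop := exists z : Z, a <= x + IZR z * PI <= b.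

Definition multicone (U : R -> Prop) : Prop :=
  exists arcs : list (R * R),
    arcs <> [] /\
    List.Forall (fun p => fst p < snd p) arcs /\
    (forall x, U x <-> exists p, In p arcs /\ in_arc (fst p) (snd p) x) /\
    (forall k l, (k < length arcs)%nat -> (l < length arcs)%nat -> k <> l ->
       forall x, ~ (in_carc (fst (nth k arcs (0,0))) (snd (nth k arcs (0,0))) x /\
                    in_carc (fst (nth l arcs (0,0))) (snd (nth l arcs (0,0))) x)) /\
    (exists x, ~ U x).

(** closure (in R, equivalently in R/piZ since U is pi-periodic) *)
Definition closure_set (U : R -> Prop) (x : R) : Prop :=
  forall eps, 0 < eps -> exists y, U y /\ Rabs (x - y) < eps.

Definition strictly_invariant (m : nat) (A : nat -> mat2) (U : R -> Prop) : Prop :=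
  forall i, (i < m)%nat -> forall x, closure_set U x -> U (phiA (A i) x).

Definition supnorm (U : R -> Prop) (f : R -> R) : R :=
  real (Lub_Rbar (fun r => exists x, closure_set U x /\ r = Rabs (f x))).

Definition pressure_zero (m : nat) (A : nat -> mat2) (U : R -> Prop) (t : R) : Prop :=
  is_lim_seq (fun n => / INR n *
     ln (sum_words m n (fun w => Rpower (supnorm U (dcirc (phiw A w))) t))) 0.

Definition crit_exp (m : nat) (A : nat -> mat2) : Rbar :=
  Lub_Rbar (fun t => 0 <= t /\
     ~ ex_series (fun n => sum_words m (S n) (fun w => Rpower (opnorm (matw A w)) (- t)))).

(* For M in SL_2(R), write u_t = (cos t, sin t). The induced map phi_M on R / pi Z has
   derivative |M u_t|^-2, and |M u_a| |M u_b| |sin (phi_M a - phi_M b)| = |sin (a - b)|.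
   Since U is strictly invariant, the points sent by a word phi_w to a fixed f0 outside U stay
   at a uniform distance from the closure of U; comparing stretching factors through such a
   point gives |A_w u_x| >= ka ||A_w|| for x in the closure of U, uniformly in w. Hence
   phi_w' is comparable to ||A_w||^-2 there, which yields (i) and, with ||A_w|| >= c lam^n, (ii).
   The same estimate makes ||A_w|| quasi-multiplicative, so by Fekete's lemma
   log sum_{|w| = n} ||A_w||^-t = n P(t) + O(1); P decreases at rate at least log lam with
   P(0) >= 0, the series defining s_A diverges exactly when P >= 0, and P_Phi(s) = P(2 s). *)

From Stdlib Require Import Reals List Lra Lia.
From Coquelicot Require Import Coquelicot.
Open Scope R_scope.

Lemma line_angle_polar (x y : R) :
  exists r, x = r * cos (line_angle x y) /\ y = r * sin (line_angle x y).
Proof.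
  unfold line_angle. destruct (Req_EM_T x 0) as [Hx|Hx].
  - exists y. rewrite cos_PI2, sin_PI2. split; lra.
  - set (a := atan (y / x)).
    assert (Hc : 0 < cos a) by (destruct (atan_bound (y / x)); apply cos_gt_0; unfold a; lra).
    assert (Hs : sin a = cos a * (y / x)).
    { rewrite <- (tan_atan (y / x)). fold a. unfold tan. field. lra. }
    destruct (Rlt_dec a 0).
    + exists (- (x / cos a)). rewrite neg_cos, neg_sin, Hs. split; field; lra.
    + exists (x / cos a). rewrite Hs. split; field; lra.
Qed.

Lemma apply_x_mmul P Q t : apply_x (mmul P Q) t = a11 P * apply_x Q t + a12 P * apply_y Q t.
Proof. unfold apply_x, apply_y, mmul; simpl; ring. Qed.

Lemma apply_y_mmul P Q t : apply_y (mmul P Q) t = a21 P * apply_x Q t + a22 P * apply_y Q t.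
Proof. unfold apply_x, apply_y, mmul; simpl; ring. Qed.

Lemma det2_mmul P Q : det2 (mmul P Q) = det2 P * det2 Q.
Proof. unfold det2, mmul; simpl; ring. Qed.

Lemma apply_cross M a b :
  apply_x M a * apply_y M b - apply_y M a * apply_x M b = det2 M * sin (b - a).
Proof. unfold apply_x, apply_y, det2. rewrite sin_minus. ring. Qed.

Lemma det2_matw m A w : (forall i, (i < m)%nat -> det2 (A i) = 1) ->
  List.Forall (fun i => (i < m)%nat) w -> det2 (matw A w) = 1.
Proof.
  intros HA Hw. induction Hw as [|j l Hj _ IH]; simpl.
  - unfold det2, mid; simpl; ring.
  - rewrite det2_mmul, IH, (HA j Hj); ring.
Qed.

Lemma matw_app A u v : matw A (u ++ v) = mmul (matw A u) (matw A v).
Proof.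
  induction u as [|i u IH]; simpl.
  - destruct (matw A v); unfold mmul, mid; simpl; f_equal; ring.
  - rewrite IH. destruct (A i), (matw A u), (matw A v); unfold mmul; simpl; f_equal; ring.
Qed.

(* [f] is a lift to R of the action of [M] on RP^1 *)
Definition is_angle_map (M : mat2) (f : R -> R) : Prop :=
  forall t, exists r, apply_x M t = r * cos (f t) /\ apply_y M t = r * sin (f t).

Lemma is_angle_map_phiA M : is_angle_map M (phiA M).
Proof. intros t. apply line_angle_polar. Qed.

Lemma is_angle_map_mmul P Q f g : is_angle_map P f -> is_angle_map Q g ->
  is_angle_map (mmul P Q) (fun t => f (g t)).
Proof.
  intros Hf Hg t. destruct (Hg t) as [r [E1 E2]]. destruct (Hf (g t)) as [r' [E3 E4]].
  exists (r * r'). rewrite apply_x_mmul, apply_y_mmul, E1, E2.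
  unfold apply_x, apply_y in *. split.
  - transitivity (r * (a11 P * cos (g t) + a12 P * sin (g t))); [ring|]. rewrite E3; ring.
  - transitivity (r * (a21 P * cos (g t) + a22 P * sin (g t))); [ring|]. rewrite E4; ring.
Qed.

Lemma is_angle_map_phiw A w : is_angle_map (matw A w) (phiw A w).
Proof.
  induction w as [|i w IH]; simpl.
  - intros t. exists 1. unfold apply_x, apply_y, mid; simpl. split; ring.
  - apply (is_angle_map_mmul _ _ (phiA (A i))); auto using is_angle_map_phiA.
Qed.

Definition image_norm (M : mat2) (t : R) : R := sqrt (apply_x M t ^ 2 + apply_y M t ^ 2).

Definition frob (M : mat2) : R := sqrt (a11 M ^ 2 + a12 M ^ 2 + a21 M ^ 2 + a22 M ^ 2).

Definition sin_dist (a b : R) : R := Rabs (sin (a - b)).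

Lemma image_norm_polar M t r th :
  apply_x M t = r * cos th -> apply_y M t = r * sin th -> image_norm M t = Rabs r.
Proof.
  unfold image_norm. intros -> ->. rewrite <- sqrt_Rsqr_abs. f_equal.
  pose proof (sin2_cos2 th). unfold Rsqr in *. nra.
Qed.

Lemma image_norm_mid t : image_norm mid t = 1.
Proof.
  rewrite (image_norm_polar mid t 1 t), Rabs_R1; auto;
    unfold apply_x, apply_y, mid; simpl; ring.
Qed.

Lemma image_norm_mmul P Q g t : is_angle_map Q g ->
  image_norm (mmul P Q) t = image_norm P (g t) * image_norm Q t.
Proof.
  intros Hg. destruct (Hg t) as [r [E1 E2]].
  rewrite (image_norm_polar Q t r (g t)) by auto.
  unfold image_norm. rewrite apply_x_mmul, apply_y_mmul, E1, E2, <- sqrt_Rsqr_abs.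
  rewrite <- sqrt_mult by (unfold Rsqr; nra). f_equal.
  unfold apply_x, apply_y, Rsqr. ring.
Qed.

Lemma image_norm_le_frob M t : image_norm M t <= frob M.
Proof.
  assert (CS : forall a b, (a * cos t + b * sin t) ^ 2 <= a ^ 2 + b ^ 2).
  { intros a b. pose proof (sin2_cos2 t). unfold Rsqr in *.
    pose proof (pow2_ge_0 (a * sin t - b * cos t)). nra. }
  apply sqrt_le_1_alt. unfold apply_x, apply_y.
  pose proof (CS (a11 M) (a12 M)). pose proof (CS (a21 M) (a22 M)). lra.
Qed.

Lemma Lub_Rbar_real_ge (E : R -> Prop) (B x : R) :
  E x -> (forall y, E y -> y <= B) -> x <= real (Lub_Rbar E).
Proof.
  intros Hx HB. destruct (Lub_Rbar_correct E) as [H1 H2].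
  assert (Rbar_le (Lub_Rbar E) B) by (apply H2; intros y Hy; apply HB; auto).
  specialize (H1 x Hx). destruct (Lub_Rbar E); simpl in *; tauto.
Qed.

Lemma Lub_Rbar_real_le (E : R -> Prop) (b : R) :
  (exists x, E x) -> (forall y, E y -> y <= b) -> real (Lub_Rbar E) <= b.
Proof.
  intros [x Hx] HB. destruct (Lub_Rbar_correct E) as [H1 H2].
  assert (Rbar_le (Lub_Rbar E) b) by (apply H2; intros y Hy; apply HB; auto).
  specialize (H1 x Hx). destruct (Lub_Rbar E); simpl in *; tauto.
Qed.

Lemma image_norm_le_opnorm M t : image_norm M t <= opnorm M.
Proof.
  apply (Lub_Rbar_real_ge _ (frob M)); [exists t; reflexivity|].
  intros y [s ->]. apply image_norm_le_frob.
Qed.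

Lemma opnorm_le M b : (forall t, image_norm M t <= b) -> opnorm M <= b.
Proof.
  intros H. apply Lub_Rbar_real_le; [exists (image_norm M 0), 0; reflexivity|].
  intros y [s ->]. apply H.
Qed.

Lemma opnorm_mid : opnorm mid = 1.
Proof.
  apply Rle_antisym.
  - apply opnorm_le. intros t. rewrite image_norm_mid. lra.
  - rewrite <- (image_norm_mid 0). apply image_norm_le_opnorm.
Qed.

Lemma opnorm_mmul_le P Q : opnorm (mmul P Q) <= opnorm P * opnorm Q.
Proof.
  apply opnorm_le. intros t. rewrite (image_norm_mmul _ _ _ _ (is_angle_map_phiA Q)).
  apply Rmult_le_compat; try apply sqrt_pos; apply image_norm_le_opnorm.
Qed.

Lemma sin_dist_sym a b : sin_dist a b = sin_dist b a.
Proof. unfold sin_dist. replace (b - a) with (- (a - b)) by ring. rewrite sin_neg, Rabs_Ropp. auto. Qed.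

Lemma sin_dist_ge_0 a b : 0 <= sin_dist a b.
Proof. apply Rabs_pos. Qed.

Lemma sin_dist_le_1 a b : sin_dist a b <= 1.
Proof. unfold sin_dist. pose proof (SIN_bound (a - b)). apply Rabs_le; lra. Qed.

Lemma sin_dist_triangle a b c : sin_dist a c <= sin_dist a b + sin_dist b c.
Proof.
  unfold sin_dist. replace (a - c) with ((a - b) + (b - c)) by ring. rewrite sin_plus.
  eapply Rle_trans; [apply Rabs_triang|]. rewrite !Rabs_mult.
  assert (Rabs (cos (b - c)) <= 1) by (pose proof (COS_bound (b - c)); apply Rabs_le; lra).
  assert (Rabs (cos (a - b)) <= 1) by (pose proof (COS_bound (a - b)); apply Rabs_le; lra).
  pose proof (Rabs_pos (sin (a - b))). pose proof (Rabs_pos (sin (b - c))). nra.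
Qed.

Lemma sin_dist_le_abs a b : sin_dist a b <= Rabs (a - b).
Proof.
  unfold sin_dist. set (u := a - b).
  assert (Hpos : forall v, 0 < v -> Rabs (sin v) <= v).
  { intros v hv. pose proof (sin_lt_x v hv). apply Rabs_le. split; [|lra].
    destruct (Rle_dec v PI).
    - pose proof (sin_ge_0 v). lra.
    - pose proof (SIN_bound v). pose proof PI2_1. lra. }
  destruct (Rtotal_order u 0) as [h|[->|h]].
  - rewrite (Rabs_left u h), <- Rabs_Ropp, <- sin_neg. apply Hpos. lra.
  - rewrite sin_0, Rabs_R0. lra.
  - rewrite (Rabs_right u) by lra. apply Hpos; auto.
Qed.

Lemma sin_dist_shift a b (z : Z) : sin_dist a (b + IZR z * PI) = sin_dist a b.
Proof.
  unfold sin_dist. replace (a - (b + IZR z * PI)) with ((a - b) - IZR z * PI) by ring.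
  assert (Hs : sin (IZR z * PI) = 0) by (apply sin_eq_0_1; eauto).
  assert (Hc : Rabs (cos (IZR z * PI)) = 1).
  { pose proof (sin2_cos2 (IZR z * PI)). rewrite Hs in H. unfold Rsqr in H.
    rewrite <- (sqrt_1), <- sqrt_Rsqr_abs. unfold Rsqr. f_equal. lra. }
  rewrite sin_minus, Hs, Rmult_0_r, Rminus_0_r, Rabs_mult, Hc. ring.
Qed.

Lemma sin_dist_eq_0 a b : sin_dist a b = 0 -> exists k : Z, a = b + IZR k * PI.
Proof.
  intros H. apply Rabs_eq_0, sin_eq_0_0 in H. destruct H as [k Hk]. exists k. lra.
Qed.

Lemma sin_dist_congr a a' b : sin_dist a a' = 0 -> sin_dist a b = sin_dist a' b.
Proof.
  intros H. pose proof (sin_dist_triangle a a' b). pose proof (sin_dist_triangle a' a b).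
  assert (sin_dist a' a = 0) by (rewrite sin_dist_sym; auto). lra.
Qed.

Lemma wrapd_spec d : exists k : Z, wrapd d = d - IZR k * PI /\ - (PI / 2) <= wrapd d < PI / 2.
Proof.
  unfold wrapd. exists (up (d / PI - / 2)). split; [ring|].
  destruct (archimed (d / PI - / 2)) as [H1 H2]. pose proof PI_RGT_0.
  set (u := IZR (up (d / PI - / 2))) in *.
  assert (E : d = PI * (d / PI)) by (field; lra).
  split.
  - assert (u <= d / PI + / 2) by lra.
    apply Rmult_le_compat_l with (r := PI) in H0; lra.
  - apply Rmult_lt_compat_l with (r := PI) in H1; lra.
Qed.

(* a positive cosine component forces [wrapd d] into (-pi/2, pi/2), where it is an arctangent *)
Lemma wrapd_atan d r S D : r * sin d = S -> r * cos d = D -> 0 < D -> wrapd d = atan (S / D).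
Proof.
  intros HS HD HDp. destruct (wrapd_spec d) as [k [Hk Hb]]. set (e := wrapd d) in *.
  assert (Hs0 : sin (e - d) = 0) by (apply sin_eq_0_1; exists (- k)%Z; rewrite Hk, opp_IZR; ring).
  rewrite sin_minus in Hs0.
  assert (E : sin e * D = cos e * S).
  { rewrite <- HS, <- HD. transitivity (r * (sin e * cos d)); [ring|].
    replace (sin e * cos d) with (cos e * sin d) by lra. ring. }
  assert (Hc : 0 < cos e).
  { destruct (cos_ge_0 e) as [Hc|Hc]; try lra. exfalso. rewrite <- Hc in E.
    assert (sin e = 0) by (apply Rmult_eq_reg_r with D; lra).
    pose proof (sin2_cos2 e). unfold Rsqr in *. nra. }
  assert (- (PI / 2) < e).
  { destruct (proj1 Hb) as [h|h]; auto. rewrite <- h, cos_neg, cos_PI2 in Hc. lra. }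
  rewrite <- (atan_tan e) by lra. f_equal. unfold tan. field_simplify_eq; lra.
Qed.

Section AngleMap.
Variables (M : mat2) (f : R -> R).
Hypotheses (HM : det2 M = 1) (Hf : is_angle_map M f).

Lemma sin_dist_angle_map a b :
  image_norm M a * image_norm M b * sin_dist (f a) (f b) = sin_dist a b.
Proof.
  destruct (Hf a) as [ra [E1 E2]]. destruct (Hf b) as [rb [E3 E4]].
  rewrite (image_norm_polar _ _ _ _ E1 E2), (image_norm_polar _ _ _ _ E3 E4).
  pose proof (apply_cross M a b) as C. rewrite HM, E1, E2, E3, E4 in C.
  rewrite (sin_dist_sym a b), (sin_dist_sym (f a)). unfold sin_dist.
  rewrite <- !Rabs_mult. f_equal. rewrite sin_minus, <- (Rmult_1_l (sin (b - a))), <- C. ring.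
Qed.

Lemma image_norm_frob_ge_1 t : 1 <= image_norm M t * frob M.
Proof.
  pose proof (sin_dist_angle_map t (t + PI / 2)) as E.
  unfold sin_dist at 2 in E. replace (t - (t + PI / 2)) with (- (PI / 2)) in E by ring.
  rewrite sin_neg, sin_PI2, Rabs_Ropp, Rabs_R1 in E.
  pose proof (image_norm_le_frob M (t + PI / 2)). pose proof (sin_dist_le_1 (f t) (f (t + PI / 2))).
  pose proof (sin_dist_ge_0 (f t) (f (t + PI / 2))).
  pose proof (sqrt_pos (apply_x M t ^ 2 + apply_y M t ^ 2)).
  pose proof (sqrt_pos (apply_x M (t + PI / 2) ^ 2 + apply_y M (t + PI / 2) ^ 2)).
  unfold image_norm in *.
  set (N0 := sqrt (apply_x M t ^ 2 + apply_y M t ^ 2)) in *.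
  set (N1 := sqrt (apply_x M (t + PI / 2) ^ 2 + apply_y M (t + PI / 2) ^ 2)) in *.
  set (s := sin_dist (f t) (f (t + PI / 2))) in *.
  assert (N0 * N1 * s <= N0 * N1 * 1) by (apply Rmult_le_compat_l; nra).
  assert (N0 * N1 <= N0 * frob M) by (apply Rmult_le_compat_l; lra). lra.
Qed.

Lemma image_norm_pos t : 0 < image_norm M t.
Proof.
  pose proof (image_norm_frob_ge_1 t).
  destruct (sqrt_pos (apply_x M t ^ 2 + apply_y M t ^ 2)) as [h|h]; auto.
  fold (image_norm M t) in h. rewrite <- h in H. lra.
Qed.

Lemma sin_dist_angle_map_lipschitz a b : sin_dist (f a) (f b) <= frob M ^ 2 * sin_dist a b.
Proof.
  rewrite <- (sin_dist_angle_map a b).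
  pose proof (image_norm_frob_ge_1 a). pose proof (image_norm_frob_ge_1 b).
  pose proof (image_norm_pos a). pose proof (image_norm_pos b). pose proof (sin_dist_ge_0 (f a) (f b)).
  assert (1 <= image_norm M a * frob M * (image_norm M b * frob M)) by nra. nra.
Qed.

Lemma angle_map_onto y : exists p, sin_dist (f p) y = 0.
Proof.
  set (Mi := Mat2 (a22 M) (- a12 M) (- a21 M) (a11 M)).
  destruct (is_angle_map_phiA Mi y) as [r [E1 E2]]. exists (phiA Mi y).
  destruct (Hf (phiA Mi y)) as [r' [F1 F2]].
  assert (G : mmul M Mi = mid) by (unfold det2 in HM; unfold mmul, Mi, mid; simpl; f_equal; lra).
  assert (G1 : r * apply_x M (phiA Mi y) = cos y).
  { transitivity (apply_x (mmul M Mi) y); [|rewrite G; unfold apply_x, mid; simpl; ring].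
    rewrite apply_x_mmul, E1, E2. unfold apply_x. ring. }
  assert (G2 : r * apply_y M (phiA Mi y) = sin y).
  { transitivity (apply_y (mmul M Mi) y); [|rewrite G; unfold apply_y, mid; simpl; ring].
    rewrite apply_y_mmul, E1, E2. unfold apply_y. ring. }
  unfold sin_dist. rewrite sin_minus, <- G1, <- G2, F1, F2, <- Rabs_R0. f_equal. ring.
Qed.

Lemma dcirc_angle_map t : dcirc f t = / image_norm M t ^ 2.
Proof.
  unfold dcirc. set (X := apply_x M t). set (Y := apply_y M t).
  set (D := fun h => X * (a11 M * cos (t + h) + a12 M * sin (t + h))
                   + Y * (a21 M * cos (t + h) + a22 M * sin (t + h))).
  assert (HD0 : D 0 = image_norm M t ^ 2).
  { unfold image_norm. rewrite pow2_sqrt by nra. unfold D, X, Y, apply_x, apply_y.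
    rewrite Rplus_0_r. ring. }
  assert (Hpos : 0 < D 0) by (rewrite HD0; pose proof (image_norm_pos t); nra).
  assert (Heq : forall h, 0 < D h -> wrapd (f (t + h) - f t) = atan (sin h / D h)).
  { intros h Hh. destruct (Hf t) as [r1 [E1 E2]]. destruct (Hf (t + h)) as [r2 [E3 E4]].
    apply (wrapd_atan _ (r1 * r2)); auto.
    - pose proof (apply_cross M t (t + h)) as C.
      rewrite HM, E1, E2, E3, E4 in C. replace (t + h - t) with h in C by ring.
      rewrite sin_minus. lra.
    - change (D h) with (X * apply_x M (t + h) + Y * apply_y M (t + h)).
      unfold X, Y. rewrite E1, E2, E3, E4, cos_minus. ring. }
  assert (Hloc : locally 0 (fun h => wrapd (f (t + h) - f t) = atan (sin h / D h))).
  { assert (Hc : continuous D 0).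
    { apply (ex_derive_continuous (K := R_AbsRing) (V := R_NormedModule)). unfold D. auto_derive. auto. }
    destruct (proj1 (filterlim_locally _ _) Hc (mkposreal _ Hpos)) as [e He].
    exists e. intros y Hy. apply Heq. specialize (He y Hy).
    change (Rabs (D y - D 0) < D 0) in He. apply Rabs_lt_between in He. lra. }
  etransitivity; [exact (Derive_ext_loc _ _ _ Hloc)|].
  rewrite <- HD0. apply is_derive_unique. unfold D. auto_derive.
  - fold (D 0). lra.
  - rewrite sin_0, cos_0. fold (D 0). field. lra.
Qed.

(* [p] is a pivot: [sin_dist_angle_map] at [(x, p)] bounds the stretching at [x]
   from below, and at [(z, p)] bounds the stretching at [z] from above *)
Lemma image_norm_compare a b x z p : 0 <= a -> a <= sin_dist x p -> b <= sin_dist (f z) (f p) ->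
  a * b * image_norm M z <= image_norm M x.
Proof.
  intros Ha0 Ha Hb.
  pose proof (sin_dist_angle_map x p) as Ex. pose proof (sin_dist_angle_map z p) as Ez.
  pose proof (sin_dist_le_1 (f x) (f p)). pose proof (sin_dist_le_1 z p).
  pose proof (sin_dist_ge_0 (f x) (f p)). pose proof (sin_dist_ge_0 x p).
  pose proof (image_norm_pos x). pose proof (image_norm_pos z). pose proof (image_norm_pos p).
  set (Nx := image_norm M x) in *. set (Nz := image_norm M z) in *. set (Np := image_norm M p) in *.
  assert (Hx : a <= Nx * Np).
  { assert (Nx * Np * sin_dist (f x) (f p) <= Nx * Np * 1) by (apply Rmult_le_compat_l; nra). lra. }
  assert (Hz : Nz * Np * b <= 1).
  { assert (Nz * Np * b <= Nz * Np * sin_dist (f z) (f p)) by (apply Rmult_le_compat_l; nra). lra. }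
  apply Rmult_le_reg_r with Np; [lra|].
  assert (a * (Nz * Np * b) <= a * 1) by (apply Rmult_le_compat_l; lra).
  replace (a * b * Nz * Np) with (a * (Nz * Np * b)) by ring. lra.
Qed.

End AngleMap.

Lemma dcirc_phiw m A n w x : (forall i, (i < m)%nat -> det2 (A i) = 1) -> is_word m n w ->
  dcirc (phiw A w) x = / image_norm (matw A w) x ^ 2.
Proof.
  intros Hdet [_ Hw]. apply dcirc_angle_map; [apply (det2_matw m); auto|apply is_angle_map_phiw].
Qed.

Lemma image_norm_word_pos m A n w x : (forall i, (i < m)%nat -> det2 (A i) = 1) ->
  is_word m n w -> 0 < image_norm (matw A w) x.
Proof.
  intros Hdet [_ Hw]. apply (image_norm_pos _ (phiw A w)).
  - apply (det2_matw m); auto.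
  - apply is_angle_map_phiw.
Qed.

Lemma opnorm_word_pos m A n w : (forall i, (i < m)%nat -> det2 (A i) = 1) -> is_word m n w ->
  0 < opnorm (matw A w).
Proof.
  intros Hdet Hw. eapply Rlt_le_trans; [apply (image_norm_word_pos m A n w 0 Hdet Hw)|].
  apply image_norm_le_opnorm.
Qed.


Lemma opnorm_ge_0 M : 0 <= opnorm M.
Proof.
  eapply Rle_trans; [apply (sqrt_pos (apply_x M 0 ^ 2 + apply_y M 0 ^ 2))|].
  apply image_norm_le_opnorm.
Qed.

Lemma exists_shift_into (c y : R) : exists k : Z, c < y + IZR k * PI <= c + PI.
Proof.
  pose proof PI_RGT_0. exists (up ((c - y) / PI)).
  destruct (archimed ((c - y) / PI)) as [H1 H2].
  set (u := IZR (up ((c - y) / PI))) in *.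
  assert (E : c - y = PI * ((c - y) / PI)) by (field; lra).
  split.
  - apply Rmult_lt_compat_l with (r := PI) in H1; lra.
  - assert (u <= (c - y) / PI + 1) by lra.
    apply Rmult_le_compat_l with (r := PI) in H0; lra.
Qed.

Definition arc_bump (q : R * R) (y : R) : R := sin (y - fst q) * sin (snd q - y).

Lemma arc_bump_lipschitz q y y' : Rabs (arc_bump q y - arc_bump q y') <= sin_dist y y'.
Proof.
  assert (Halt : forall y, arc_bump q y = (cos (2 * y - fst q - snd q) - cos (snd q - fst q)) / 2).
  { intros z. unfold arc_bump.
    replace (2 * z - fst q - snd q) with ((z - fst q) - (snd q - z)) by ring.
    replace (snd q - fst q) with ((z - fst q) + (snd q - z)) by ring.
    rewrite cos_minus, cos_plus. field. }
  rewrite !Halt.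
  replace ((cos (2 * y - fst q - snd q) - cos (snd q - fst q)) / 2 -
           (cos (2 * y' - fst q - snd q) - cos (snd q - fst q)) / 2)
    with ((cos (2 * y - fst q - snd q) - cos (2 * y' - fst q - snd q)) / 2) by field.
  rewrite form2.
  replace ((2 * y - fst q - snd q - (2 * y' - fst q - snd q)) / 2) with (y - y') by field.
  set (v := (2 * y - fst q - snd q + (2 * y' - fst q - snd q)) / 2).
  assert (Rabs (sin v) <= 1) by (pose proof (SIN_bound v); apply Rabs_le; lra).
  unfold sin_dist. rewrite Rabs_div, !Rabs_mult, (Rabs_left (-2)), (Rabs_right 2) by lra.
  pose proof (Rabs_pos (sin (y - y'))). nra.
Qed.

Lemma arc_bump_shift q y (z : Z) : arc_bump q (y + IZR z * PI) = arc_bump q y.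
Proof.
  pose proof (arc_bump_lipschitz q (y + IZR z * PI) y) as H.
  rewrite sin_dist_sym, sin_dist_shift in H. unfold sin_dist in H.
  rewrite Rminus_diag, sin_0, Rabs_R0 in H.
  pose proof (Rabs_pos (arc_bump q (y + IZR z * PI) - arc_bump q y)).
  assert (Rabs (arc_bump q (y + IZR z * PI) - arc_bump q y) = 0) by lra.
  apply Rabs_eq_0 in H1. lra.
Qed.

Lemma arc_bump_pos_iff q y : fst q < snd q -> snd q - fst q <= PI ->
  0 < arc_bump q y <-> in_arc (fst q) (snd q) y.
Proof.
  intros Hlt Hle. split.
  - intros HG. destruct (exists_shift_into (fst q) y) as [k Hk].
    rewrite <- (arc_bump_shift q y k) in HG. unfold arc_bump in HG.
    set (y' := y + IZR k * PI) in *. exists k. fold y'.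
    assert (Hs : 0 < sin (y' - fst q)).
    { destruct (sin_ge_0 (y' - fst q)) as [h|h]; try lra. rewrite <- h in HG. lra. }
    assert (Hs2 : 0 < sin (snd q - y')) by nra.
    split; [lra|]. destruct (Rtotal_order y' (snd q)) as [h|[h|h]]; auto; exfalso.
    + rewrite h, Rminus_diag, sin_0 in Hs2. lra.
    + assert (sin (snd q - y') < 0) by (apply sin_lt_0_var; lra). lra.
  - intros [z Hz]. rewrite <- (arc_bump_shift q y z). unfold arc_bump.
    apply Rmult_lt_0_compat; apply sin_gt_0; lra.
Qed.

Definition cone_bump (arcs : list (R * R)) (y : R) : R :=
  fold_right (fun q acc => Rmax (arc_bump q y) acc) 0 arcs.

Lemma cone_bump_lipschitz arcs y y' : Rabs (cone_bump arcs y - cone_bump arcs y') <= sin_dist y y'.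
Proof.
  assert (H1 : forall y y', cone_bump arcs y <= cone_bump arcs y' + sin_dist y y').
  { clear y y'. intros y y'. induction arcs as [|q arcs IH]; simpl.
    - pose proof (sin_dist_ge_0 y y'). lra.
    - pose proof (arc_bump_lipschitz q y y') as H. apply Rabs_le_between in H.
      pose proof (Rmax_l (arc_bump q y') (cone_bump arcs y')).
      pose proof (Rmax_r (arc_bump q y') (cone_bump arcs y')).
      unfold cone_bump in *. apply Rmax_lub; lra. }
  pose proof (H1 y y'). pose proof (H1 y' y). rewrite sin_dist_sym in H0. apply Rabs_le. lra.
Qed.

Lemma cone_bump_pos_iff arcs y :
  0 < cone_bump arcs y <-> exists q, In q arcs /\ 0 < arc_bump q y.
Proof.
  induction arcs as [|q arcs IH].
  - simpl. split; [lra|]. intros [q [[] _]].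
  - change (cone_bump (q :: arcs) y) with (Rmax (arc_bump q y) (cone_bump arcs y)).
    destruct (Rle_dec (arc_bump q y) (cone_bump arcs y)) as [h|h].
    + rewrite Rmax_right, IH by lra. split; [intros [q' [? ?]]; exists q'; simpl; auto|].
      intros [q' [[<-|Hq] Hpos]]; [apply IH; lra|eauto].
    + rewrite Rmax_left by lra. split; [exists q; simpl; auto|].
      intros [q' [[<-|Hq] Hpos]]; auto.
      assert (0 < cone_bump arcs y) by (apply IH; eauto). lra.
Qed.

Lemma closure_set_of (U : R -> Prop) x : U x -> closure_set U x.
Proof. intros H eps He. exists x. rewrite Rminus_diag, Rabs_R0. auto. Qed.

Lemma list_uniform_pos {T} (l : list T) (Q : T -> R -> Prop) :
  (forall p r r', Q p r -> 0 < r' <= r -> Q p r') ->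
  (forall p, In p l -> exists r, 0 < r /\ Q p r) ->
  exists r, 0 < r /\ forall p, In p l -> Q p r.
Proof.
  intros Hmono. induction l as [|a l IH]; intros H.
  - exists 1. split; [lra|]. intros p [].
  - destruct (H a (or_introl eq_refl)) as [ra [Hra Qa]].
    destruct IH as [r [Hr Hq]]; [intros p Hp; apply H; right; auto|].
    exists (Rmin ra r). split; [apply Rmin_pos; auto|].
    intros p [<-|Hp]; [apply (Hmono _ ra)|apply (Hmono _ r)]; auto;
      split; auto using Rmin_pos, Rmin_l, Rmin_r.
Qed.

Lemma sin_dist_lipschitz_continuity_pt (h : R -> R) (L x : R) : 0 <= L ->
  (forall a b, Rabs (h a - h b) <= L * sin_dist a b) -> continuity_pt h x.
Proof.
  intros HL Hh eps Heps. exists (eps / (L + 1)). split; [apply Rdiv_lt_0_compat; lra|].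
  intros y [_ Hy]. simpl in *. unfold Rdist in *.
  eapply Rle_lt_trans; [apply Hh|].
  apply Rle_lt_trans with ((L + 1) * Rabs (y - x)).
  - pose proof (sin_dist_le_abs y x). pose proof (sin_dist_ge_0 y x). nra.
  - apply Rmult_lt_compat_l with (r := L + 1) in Hy; [|lra].
    replace ((L + 1) * (eps / (L + 1))) with eps in Hy by (field; lra). lra.
Qed.

Lemma closure_arc (U : R -> Prop) arcs q x :
  (forall x, U x <-> exists p, In p arcs /\ in_arc (fst p) (snd p) x) ->
  In q arcs -> fst q < snd q -> fst q <= x <= snd q -> closure_set U x.
Proof.
  intros HU Hq Hlt Hx eps He.
  set (c := fst q) in *. set (d := snd q) in *. set (t := Rmin 1 (eps / (2 * (d - c)))).
  assert (Ht : 0 < t <= 1) by (split; [apply Rmin_pos; [lra|apply Rdiv_lt_0_compat; lra]|apply Rmin_l]).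
  assert (Ht2 : t * (d - c) < eps).
  { assert (t <= eps / (2 * (d - c))) by apply Rmin_r.
    apply Rmult_le_compat_r with (r := d - c) in H; [|lra].
    replace (eps / (2 * (d - c)) * (d - c)) with (eps / 2) in H by (field; lra). lra. }
  exists ((1 - t) * x + t * ((c + d) / 2)). split.
  - apply HU. exists q. split; auto. exists 0%Z. simpl. fold c d. nra.
  - replace (x - ((1 - t) * x + t * ((c + d) / 2))) with (t * (x - (c + d) / 2)) by ring.
    rewrite Rabs_mult, (Rabs_right t) by lra.
    assert (Rabs (x - (c + d) / 2) <= d - c) by (apply Rabs_le; lra). nra.
Qed.

Section Multicone.
Variable U : R -> Prop.
Hypothesis HU : multicone U.

Lemma multicone_bump : exists G : R -> R,
  (forall y y', Rabs (G y - G y') <= sin_dist y y') /\ (forall y, U y <-> 0 < G y).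
Proof.
  destruct HU as [arcs [_ [Hlt [Hdef [_ [x0 Hx0]]]]]]. rewrite Forall_forall in Hlt.
  assert (Hlen : forall q, In q arcs -> snd q - fst q <= PI).
  { intros q Hq. destruct (Rle_dec (snd q - fst q) PI) as [h|h]; auto. exfalso.
    apply Hx0, Hdef. exists q. split; auto.
    destruct (exists_shift_into (fst q) x0) as [k Hk]. exists k. lra. }
  exists (cone_bump arcs). split; [apply cone_bump_lipschitz|]. intros y.
  rewrite Hdef, cone_bump_pos_iff. split; intros [q [Hq H]]; exists q; split; auto;
    apply (arc_bump_pos_iff q y (Hlt q Hq) (Hlen q Hq)); auto.
Qed.

Lemma multicone_periodic y (k : Z) : U (y + IZR k * PI) -> U y.
Proof.
  destruct multicone_bump as [G [HG HUG]]. rewrite !HUG.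
  pose proof (HG y (y + IZR k * PI)) as H. rewrite sin_dist_shift in H.
  unfold sin_dist in H. rewrite Rminus_diag, sin_0, Rabs_R0 in H.
  apply Rabs_le_between in H. lra.
Qed.

Lemma multicone_far_point : exists eta, 0 < eta /\
  forall x, exists p, closure_set U p /\ eta <= sin_dist x p.
Proof.
  destruct HU as [[|q arcs] [Hne [Hlt [Hdef _]]]]; [congruence|].
  assert (Hq : fst q < snd q) by (inversion Hlt; auto).
  set (L := Rmin (snd q - fst q) 1).
  assert (HL : 0 < L <= snd q - fst q /\ L <= 1)
    by (unfold L; split; [split; [apply Rmin_pos; lra|apply Rmin_l]|apply Rmin_r]).
  set (q1 := fst q + L / 4). set (q2 := fst q + 3 * L / 4).
  assert (Hin : forall y, fst q < y < snd q -> closure_set U y).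
  { intros y Hy. apply closure_set_of, Hdef. exists q. split; [left; auto|].
    exists 0%Z. simpl. lra. }
  assert (Hs : 0 < sin_dist q2 q1).
  { unfold sin_dist, q1, q2. replace (fst q + 3 * L / 4 - (fst q + L / 4)) with (L / 2) by field.
    pose proof PI2_1. rewrite Rabs_right; [|left]; apply sin_gt_0; lra. }
  exists (sin_dist q2 q1 / 2). split; [lra|]. intros x.
  pose proof (sin_dist_triangle q2 x q1). rewrite (sin_dist_sym q2 x) in H.
  destruct (Rle_dec (sin_dist q2 q1 / 2) (sin_dist x q1)).
  - exists q1. split; auto. apply Hin. unfold q1. lra.
  - exists q2. split; [apply Hin; unfold q2; lra|lra].
Qed.

Lemma multicone_closure_inhabited : exists x, closure_set U x.
Proof.
  destruct multicone_far_point as [eta [_ Hfar]]. destruct (Hfar 0) as [p [Hp _]]. eauto.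
Qed.

Lemma closure_lipschitz_min (h : R -> R) L : 0 <= L ->
  (forall a b, Rabs (h a - h b) <= L * sin_dist a b) ->
  (forall x, closure_set U x -> 0 < h x) ->
  exists rho, 0 < rho /\ forall x, closure_set U x -> rho <= h x.
Proof.
  intros HL Hh Hpos.
  destruct HU as [arcs [_ [Hlt [Hdef _]]]]. rewrite Forall_forall in Hlt.
  destruct (list_uniform_pos arcs (fun q r => forall x, fst q <= x <= snd q -> r <= h x))
    as [rho [Hrho Harcs]].
  - intros q r r' H [H1 H2] x Hx. specialize (H x Hx). lra.
  - intros q Hq. destruct (continuity_ab_min h (fst q) (snd q)) as [x0 [Hmin Hx0]].
    + specialize (Hlt q Hq). lra.
    + intros x _. apply (sin_dist_lipschitz_continuity_pt h L); auto.
    + exists (h x0). split; auto. apply Hpos.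
      apply (closure_arc U arcs q); auto.
  - exists (rho / 2). split; [lra|]. intros x Hx.
    destruct (Hx (rho / (2 * (L + 1)))) as [y [Hy Hxy]]; [apply Rdiv_lt_0_compat; lra|].
    apply Hdef in Hy. destruct Hy as [q [Hq [z Hz]]].
    assert (H1 : rho <= h (y + IZR z * PI)) by (apply (Harcs q Hq); lra).
    pose proof (Hh x (y + IZR z * PI)) as H2. rewrite sin_dist_shift in H2.
    apply Rabs_le_between in H2.
    assert (L * sin_dist x y <= L * (rho / (2 * (L + 1))))
      by (apply Rmult_le_compat_l; [lra|]; pose proof (sin_dist_le_abs x y); lra).
    assert (L * (rho / (2 * (L + 1))) <= rho / 2).
    { apply Rmult_le_reg_r with (2 * (L + 1)); [lra|].
      replace (L * (rho / (2 * (L + 1))) * (2 * (L + 1))) with (L * rho) by (field; lra). nra. }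
    lra.
Qed.

End Multicone.

Section StrictlyInvariant.
Variables (m : nat) (A : nat -> mat2) (U : R -> Prop).
Hypotheses (Hdet : forall i, (i < m)%nat -> det2 (A i) = 1)
  (HU : multicone U) (Hinv : strictly_invariant m A U).

Let letters := List.Forall (fun i => (i < m)%nat).

Lemma closure_phiw w x : letters w -> closure_set U x -> closure_set U (phiw A w x).
Proof.
  intros Hw. revert x. induction Hw as [|j l Hj _ IH]; intros x Hx; simpl; auto.
  apply closure_set_of, Hinv; auto.
Qed.

Lemma U_phiw_snoc w j y : letters w -> U (phiA (A j) y) -> U (phiw A (w ++ j :: nil) y).
Proof.
  intros Hw. induction Hw as [|i l Hi _ IH]; intros Hy; simpl; auto.
  apply Hinv; auto. apply closure_set_of, IH; auto.
Qed.

Lemma letter_uniform_pos (Q : nat -> R -> Prop) :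
  (forall i r r', Q i r -> 0 < r' <= r -> Q i r') ->
  (forall i, (i < m)%nat -> exists r, 0 < r /\ Q i r) ->
  exists r, 0 < r /\ forall i, (i < m)%nat -> Q i r.
Proof.
  intros Hmono H. destruct (list_uniform_pos (seq 0 m) Q Hmono) as [r [Hr HQ]].
  - intros i Hi. apply in_seq in Hi. apply H. lia.
  - exists r. split; auto. intros i Hi. apply HQ, in_seq. lia.
Qed.

Lemma strictly_invariant_margin : exists k, 0 < k /\ forall i, (i < m)%nat ->
  forall x p, closure_set U x -> sin_dist x p < k -> U (phiA (A i) p).
Proof.
  destruct (multicone_bump U HU) as [G [HG HUG]].
  apply letter_uniform_pos.
  { intros i r r' H [H1 H2] x p Hx Hs. apply (H x p Hx). lra. }
  intros i Hi. set (L := frob (A i) ^ 2). set (h := fun x => G (phiA (A i) x)).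
  assert (HL : 0 <= L) by apply pow2_ge_0.
  assert (Hh : forall a b, Rabs (h a - h b) <= L * sin_dist a b).
  { intros a b. eapply Rle_trans; [apply HG|].
    apply sin_dist_angle_map_lipschitz; auto using is_angle_map_phiA. }
  destruct (closure_lipschitz_min U HU h L HL Hh) as [rho [Hrho Hmin]].
  { intros x Hx. apply HUG, Hinv; auto. }
  exists (rho / (L + 1)). split; [apply Rdiv_lt_0_compat; lra|].
  intros x p Hx Hs. apply HUG. fold (h p).
  specialize (Hmin x Hx). specialize (Hh x p). apply Rabs_le_between in Hh.
  assert (L * sin_dist x p <= L * (rho / (L + 1))) by (apply Rmult_le_compat_l; lra).
  assert (L * (rho / (L + 1)) < rho).
  { apply Rmult_lt_reg_r with (L + 1); [lra|].
    replace (L * (rho / (L + 1)) * (L + 1)) with (L * rho) by (field; lra). nra. }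
  lra.
Qed.

Section Outside.
Variable f0 : R.
Hypothesis Hf0 : ~ U f0.

Lemma image_sin_dist_outside_ge : exists d, 0 < d /\ forall w y, w <> nil -> letters w ->
  closure_set U y -> d <= sin_dist (phiw A w y) f0.
Proof.
  destruct (letter_uniform_pos
              (fun i d => forall y, closure_set U y -> d <= sin_dist (phiA (A i) y) f0))
    as [d [Hd Hletter]].
  - intros i r r' H [H1 H2] y Hy. specialize (H y Hy). lra.
  - intros i Hi. set (L := frob (A i) ^ 2).
    apply (closure_lipschitz_min U HU _ L); [apply pow2_ge_0| |].
    + intros a b. eapply Rle_trans; [|apply sin_dist_angle_map_lipschitz; auto using is_angle_map_phiA].
      pose proof (sin_dist_triangle (phiA (A i) a) (phiA (A i) b) f0).
      pose proof (sin_dist_triangle (phiA (A i) b) (phiA (A i) a) f0).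
      rewrite (sin_dist_sym (phiA (A i) b) (phiA (A i) a)) in H0. apply Rabs_le. lra.
    + intros y Hy. destruct (sin_dist_ge_0 (phiA (A i) y) f0) as [h|h]; auto. exfalso.
      destruct (sin_dist_eq_0 _ _ (eq_sym h)) as [k Hk].
      apply Hf0, (multicone_periodic U HU f0 k). rewrite <- Hk. apply Hinv; auto.
  - exists d. split; auto. intros [|i w] y Hne Hw Hy; [congruence|].
    inversion Hw. apply Hletter; auto. apply closure_phiw; auto.
Qed.

Lemma preimage_outside_far k : 0 < k ->
  (forall i, (i < m)%nat -> forall x p, closure_set U x -> sin_dist x p < k -> U (phiA (A i) p)) ->
  forall w p x, w <> nil -> letters w -> sin_dist (phiw A w p) f0 = 0 ->
  closure_set U x -> k <= sin_dist x p.
Proof.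
  intros Hk Hmargin w p x Hne Hw Hp Hx.
  destruct (Rle_dec k (sin_dist x p)) as [h|h]; auto. exfalso.
  destruct (exists_last Hne) as [w' [j ->]].
  apply Forall_app in Hw. destruct Hw as [Hw' Hj]. inversion Hj.
  destruct (sin_dist_eq_0 _ _ Hp) as [z Hz].
  apply Hf0, (multicone_periodic U HU f0 z). rewrite <- Hz.
  apply U_phiw_snoc; auto. apply (Hmargin j) with x; auto. lra.
Qed.

End Outside.

Lemma image_norm_uniform : exists ka, 0 < ka <= 1 /\ forall n w x, is_word m n w ->
  closure_set U x -> ka * opnorm (matw A w) <= image_norm (matw A w) x.
Proof.
  destruct strictly_invariant_margin as [k [Hk Hmargin]].
  assert (exists f0, ~ U f0) as [f0 Hf0] by (destruct HU as (arcs & _ & _ & _ & _ & H); exact H).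
  destruct (image_sin_dist_outside_ge f0 Hf0) as [d [Hd Hout]].
  destruct (multicone_far_point U HU) as [eta [Heta Hfar]].
  set (ka := Rmin 1 (Rmin (k * d / 2) (eta * d / 2))).
  assert (Hka : 0 < ka) by (repeat apply Rmin_pos; nra).
  assert (Hka1 : ka <= k * d / 2) by (unfold ka; rewrite Rmin_r; apply Rmin_l).
  assert (Hka2 : ka <= eta * d / 2) by (unfold ka; rewrite Rmin_r; apply Rmin_r).
  assert (Hka0 : ka <= 1) by apply Rmin_l.
  exists ka. split; [lra|].
  intros n [|i w'] x [_ Hw] Hx.
  - simpl. rewrite opnorm_mid, image_norm_mid. lra.
  - set (w := i :: w') in *. assert (Hne : w <> nil) by discriminate.
    pose proof (det2_matw m A w Hdet Hw) as HM. pose proof (is_angle_map_phiw A w) as Hf.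
    set (M := matw A w) in *. set (f := phiw A w) in *.
    assert (Hz : forall z, ka * image_norm M z <= image_norm M x).
    { intros z. pose proof (image_norm_pos M f HM Hf z).
      (* either the preimage of [f0] or a point of the closure far from [x] is a good pivot *)
      destruct (Rle_dec (d / 2) (sin_dist (f z) f0)) as [Hfz|Hfz].
      - destruct (angle_map_onto M f HM Hf f0) as [p Hp].
        eapply Rle_trans; [|apply (image_norm_compare M f HM Hf k (d / 2) x z p)]; try lra.
        + apply Rmult_le_compat_r; lra.
        + apply (preimage_outside_far f0 Hf0 k Hk Hmargin w); auto.
        + rewrite (sin_dist_sym (f z)), (sin_dist_congr _ _ _ Hp), sin_dist_sym. lra.
      - destruct (Hfar x) as [p [Hp Hxp]].
        eapply Rle_trans; [|apply (image_norm_compare M f HM Hf eta (d / 2) x z p)]; try lra.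
        + apply Rmult_le_compat_r; lra.
        + pose proof (Hout w p Hne Hw Hp) as Hfp. fold f in Hfp.
          pose proof (sin_dist_triangle (f p) (f z) f0) as Htri.
          rewrite (sin_dist_sym (f p) (f z)) in Htri. lra. }
    apply Rmult_le_reg_l with (/ ka); [apply Rinv_0_lt_compat; lra|].
    rewrite <- Rmult_assoc, Rinv_l, Rmult_1_l by lra. apply opnorm_le. intros t.
    apply Rmult_le_reg_l with ka; [lra|]. rewrite <- Rmult_assoc, Rinv_r, Rmult_1_l by lra. auto.
Qed.

End StrictlyInvariant.

Definition lsum {T} (f : T -> R) (l : list T) : R := fold_right Rplus 0 (map f l).

Lemma lsum_app {T} (f : T -> R) l1 l2 : lsum f (l1 ++ l2) = lsum f l1 + lsum f l2.
Proof. induction l1 as [|a l IH]; unfold lsum in *; simpl; [ring|]. rewrite IH. ring. Qed.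

Lemma lsum_concat {T} (f : T -> R) (L : list (list T)) : lsum f (concat L) = lsum (lsum f) L.
Proof. induction L as [|a L IH]; [reflexivity|]. simpl. rewrite lsum_app, IH. reflexivity. Qed.

Lemma lsum_map {T T'} (f : T' -> R) (g : T -> T') l : lsum f (map g l) = lsum (fun x => f (g x)) l.
Proof. unfold lsum. rewrite map_map. auto. Qed.

Lemma lsum_le {T} (f g : T -> R) l : (forall x, In x l -> f x <= g x) -> lsum f l <= lsum g l.
Proof.
  induction l as [|a l IH]; intros H; unfold lsum in *; simpl; [lra|].
  apply Rplus_le_compat; [apply H; left; auto|apply IH; intros; apply H; right; auto].
Qed.

Lemma lsum_ext {T} (f g : T -> R) l : (forall x, In x l -> f x = g x) -> lsum f l = lsum g l.
Proof. intros H. apply Rle_antisym; apply lsum_le; intros x Hx; rewrite H; auto; lra. Qed.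

Lemma lsum_scal {T} (f : T -> R) k l : lsum (fun x => k * f x) l = k * lsum f l.
Proof. induction l as [|a l IH]; unfold lsum in *; simpl; [ring|]. rewrite IH. ring. Qed.

Lemma lsum_pos {T} (f : T -> R) l : l <> nil -> (forall x, In x l -> 0 < f x) -> 0 < lsum f l.
Proof.
  induction l as [|a [|b l] IH]; intros Hne H; [congruence| |].
  - unfold lsum; simpl. rewrite Rplus_0_r. apply H. left; auto.
  - change (0 < f a + lsum f (b :: l)). apply Rplus_lt_0_compat; [apply H; left; auto|].
    apply IH; [discriminate|]. intros; apply H; right; auto.
Qed.

Lemma sum_words_0 m f : sum_words m 0 f = f nil.
Proof. unfold sum_words; simpl. ring. Qed.

Lemma sum_words_S m n f :
  sum_words m (S n) f = lsum (fun i => sum_words m n (fun w => f (i :: w))) (seq 0 m).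
Proof.
  unfold sum_words at 1. simpl.
  fold (lsum f (concat (map (fun i => map (cons i) (all_words m n)) (seq 0 m)))).
  rewrite lsum_concat, lsum_map. apply lsum_ext. intros i _. apply lsum_map.
Qed.

Lemma all_words_is_word m n w : In w (all_words m n) -> is_word m n w.
Proof.
  revert w. induction n as [|n IH]; intros w H; simpl in H.
  - destruct H as [<-|[]]. split; auto.
  - apply in_concat in H. destruct H as [l [H1 H2]]. apply in_map_iff in H1.
    destruct H1 as [i [<- Hi]]. apply in_map_iff in H2. destruct H2 as [w' [<- Hw']].
    apply in_seq in Hi. destruct (IH w' Hw') as [Hl Hf]. split; simpl; auto. constructor; auto. lia.
Qed.

Lemma sum_words_le m n f g : (forall w, is_word m n w -> f w <= g w) ->
  sum_words m n f <= sum_words m n g.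
Proof. intros H. apply lsum_le. intros; apply H, all_words_is_word; auto. Qed.

Lemma sum_words_ext m n f g : (forall w, is_word m n w -> f w = g w) ->
  sum_words m n f = sum_words m n g.
Proof. intros H. apply lsum_ext. intros; apply H, all_words_is_word; auto. Qed.

Lemma sum_words_scal m n f k : sum_words m n (fun w => k * f w) = k * sum_words m n f.
Proof. apply lsum_scal. Qed.

Lemma sum_words_pos m n f : (0 < m)%nat -> (forall w, is_word m n w -> 0 < f w) ->
  0 < sum_words m n f.
Proof.
  intros Hm H. apply lsum_pos; [clear H|intros; apply H, all_words_is_word; auto].
  induction n as [|n IH]; simpl; [discriminate|].
  destruct m as [|m']; [lia|]. simpl. destruct (all_words (S m') n) eqn:E; [congruence|]. discriminate.
Qed.

Lemma sum_words_const m n k : sum_words m n (fun _ => k) = INR m ^ n * k.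
Proof.
  induction n as [|n IH].
  - rewrite sum_words_0. simpl. ring.
  - rewrite sum_words_S, (lsum_ext _ (fun _ => INR m ^ n * k)) by auto.
    replace (INR m ^ S n * k) with (INR (length (seq 0 m)) * (INR m ^ n * k))
      by (rewrite length_seq; simpl; ring).
    induction (seq 0 m) as [|a l IHl]; unfold lsum in *; simpl in *; [ring|].
    rewrite IHl. destruct (length l); simpl; ring.
Qed.

Lemma sum_words_app m n k h :
  sum_words m (n + k) h = sum_words m n (fun u => sum_words m k (fun v => h (u ++ v))).
Proof.
  revert h. induction n as [|n IH]; intros h; [rewrite sum_words_0; reflexivity|].
  simpl. rewrite !sum_words_S. apply lsum_ext. intros i _. apply IH.
Qed.

Lemma sum_words_mult m n k f g :
  sum_words m n f * sum_words m k g = sum_words m n (fun u => sum_words m k (fun v => f u * g v)).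
Proof.
  rewrite Rmult_comm, <- sum_words_scal. apply lsum_ext. intros u _.
  rewrite Rmult_comm, <- sum_words_scal. reflexivity.
Qed.

Lemma ln_sum_words_le m n f g e : (0 < m)%nat ->
  (forall w, is_word m n w -> 0 < f w /\ 0 < g w /\ ln (f w) <= ln (g w) + e) ->
  ln (sum_words m n f) <= ln (sum_words m n g) + e.
Proof.
  intros Hm H.
  assert (Hf : 0 < sum_words m n f) by (apply sum_words_pos; auto; apply H).
  assert (Hg : 0 < sum_words m n g) by (apply sum_words_pos; auto; apply H).
  rewrite <- (ln_exp e), <- ln_mult by (auto; apply exp_pos). apply ln_le; auto.
  rewrite Rmult_comm, <- sum_words_scal. apply sum_words_le. intros w Hw.
  destruct (H w Hw) as [Hfw [Hgw Hl]].
  rewrite <- (exp_ln (f w)), <- (exp_ln (g w)), <- exp_plus by auto.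
  destruct Hl as [Hl|Hl]; [left; apply exp_increasing; lra|rewrite Hl, Rplus_comm; lra].
Qed.

Lemma ln_sum_words_close m n f g e : (0 < m)%nat ->
  (forall w, is_word m n w -> 0 < f w /\ 0 < g w /\ Rabs (ln (f w) - ln (g w)) <= e) ->
  Rabs (ln (sum_words m n f) - ln (sum_words m n g)) <= e.
Proof.
  intros Hm H. apply Rabs_le.
  assert (ln (sum_words m n f) <= ln (sum_words m n g) + e).
  { apply ln_sum_words_le; auto. intros w Hw. destruct (H w Hw) as [? [? Hl]].
    apply Rabs_le_between in Hl. repeat split; auto; lra. }
  assert (ln (sum_words m n g) <= ln (sum_words m n f) + e).
  { apply ln_sum_words_le; auto. intros w Hw. destruct (H w Hw) as [? [? Hl]].
    apply Rabs_le_between in Hl. repeat split; auto; lra. }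
  lra.
Qed.

(* Fekete's lemma with an error term *)
Lemma almost_additive_linear (a : nat -> R) e : 0 <= e ->
  (forall n k, (1 <= n)%nat -> (1 <= k)%nat -> Rabs (a (n + k)%nat - a n - a k) <= e) ->
  exists P, forall n, (1 <= n)%nat -> Rabs (a n - INR n * P) <= e.
Proof.
  intros He H.
  assert (Hmul : forall j k, (1 <= j)%nat -> (1 <= k)%nat ->
            INR j * (a k - e) <= a (j * k)%nat - e /\ a (j * k)%nat + e <= INR j * (a k + e)).
  { intros j k Hj Hk. induction j as [|j IH]; [lia|].
    destruct (Nat.eq_dec j 0) as [->|Hj0]; [simpl; rewrite Nat.add_0_r; lra|].
    specialize (IH ltac:(lia)). replace (S j * k)%nat with (j * k + k)%nat by lia.
    pose proof (H (j * k)%nat k ltac:(nia) Hk) as Hjk. apply Rabs_le_between in Hjk.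
    rewrite S_INR. lra. }
  assert (Hcross : forall n k, (1 <= n)%nat -> (1 <= k)%nat -> (a k - e) / INR k <= (a n + e) / INR n).
  { intros n k Hn Hk.
    assert (0 < INR n) by (apply lt_0_INR; lia). assert (0 < INR k) by (apply lt_0_INR; lia).
    destruct (Hmul n k Hn Hk) as [Hlo _]. destruct (Hmul k n Hk Hn) as [_ Hhi].
    rewrite Nat.mul_comm in Hhi.
    apply Rmult_le_reg_r with (INR n * INR k); [nra|].
    replace ((a k - e) / INR k * (INR n * INR k)) with (INR n * (a k - e)) by (field; lra).
    replace ((a n + e) / INR n * (INR n * INR k)) with (INR k * (a n + e)) by (field; lra). lra. }
  set (E := fun x => exists k, (1 <= k)%nat /\ x = (a k - e) / INR k).
  exists (real (Lub_Rbar E)). intros n Hn.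
  assert (0 < INR n) by (apply lt_0_INR; lia).
  assert (L1 : (a n - e) / INR n <= real (Lub_Rbar E)).
  { apply (Lub_Rbar_real_ge E ((a 1%nat + e) / INR 1)); [exists n; auto|].
    intros y [k [Hk ->]]. apply Hcross; auto. }
  assert (L2 : real (Lub_Rbar E) <= (a n + e) / INR n).
  { apply Lub_Rbar_real_le; [exists ((a 1%nat - e) / INR 1), 1%nat; auto|].
    intros y [k [Hk ->]]. apply Hcross; auto. }
  apply Rmult_le_compat_r with (r := INR n) in L1; [|lra].
  apply Rmult_le_compat_r with (r := INR n) in L2; [|lra].
  replace ((a n - e) / INR n * INR n) with (a n - e) in L1 by (field; lra).
  replace ((a n + e) / INR n * INR n) with (a n + e) in L2 by (field; lra).
  apply Rabs_le. lra.
Qed.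

Lemma is_lim_seq_avg_of_linear (a : nat -> R) P e :
  (forall n, (1 <= n)%nat -> Rabs (a n - INR n * P) <= e) ->
  is_lim_seq (fun n => / INR n * a n) P.
Proof.
  intros H.
  assert (Hlim : forall s, is_lim_seq (fun n => P + s * / INR n) P).
  { intros s.
    assert (H0 : is_lim_seq (fun n => s * / INR n) 0).
    { rewrite <- (Rmult_0_r s). apply (is_lim_seq_scal_l _ s 0).
      exact (is_lim_seq_inv _ _ is_lim_seq_INR ltac:(discriminate)). }
    pose proof (is_lim_seq_plus' _ _ P 0 (is_lim_seq_const P) H0) as H1.
    rewrite Rplus_0_r in H1. exact H1. }
  apply is_lim_seq_le_le_loc with (u := fun n => P + - e * / INR n) (w := fun n => P + e * / INR n);
    auto.
  exists 1%nat. intros n Hn. specialize (H n Hn). apply Rabs_le_between in H.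
  assert (0 < INR n) by (apply lt_0_INR; lia).
  replace (/ INR n * a n) with (P + (a n - INR n * P) * / INR n) by (field; lra).
  assert (0 < / INR n) by (apply Rinv_0_lt_compat; lra). split; nra.
Qed.

Lemma linear_growth_le (a b : nat -> R) P Q e e' d K :
  (forall n, (1 <= n)%nat -> Rabs (a n - INR n * P) <= e) ->
  (forall n, (1 <= n)%nat -> Rabs (b n - INR n * Q) <= e') ->
  (forall n, (1 <= n)%nat -> a n <= b n + INR n * d + K) -> P <= Q + d.
Proof.
  intros Ha Hb Hab. destruct (Rle_dec P (Q + d)) as [h|h]; auto. exfalso.
  set (x := P - Q - d). assert (Hx : 0 < x) by (unfold x; lra).
  assert (Hn : forall n, (1 <= n)%nat -> INR n * x <= e + e' + K).
  { intros n Hn. specialize (Ha n Hn). specialize (Hb n Hn). specialize (Hab n Hn).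
    apply Rabs_le_between in Ha. apply Rabs_le_between in Hb. unfold x. nra. }
  destruct (INR_unbounded (Rabs (e + e' + K) / x)) as [n Hn'].
  assert (0 <= Rabs (e + e' + K) / x) by (apply Rdiv_le_0_compat; [apply Rabs_pos|lra]).
  destruct n as [|n]; [simpl in Hn'; lra|].
  specialize (Hn (S n) ltac:(lia)).
  apply Rmult_gt_compat_r with (r := x) in Hn'; [|lra].
  replace (Rabs (e + e' + K) / x * x) with (Rabs (e + e' + K)) in Hn' by (field; lra).
  pose proof (Rle_abs (e + e' + K)). lra.
Qed.

Lemma Lub_Rbar_nonneg_zero (P : R -> R) a b x : 0 < a -> 0 <= b -> 0 <= P 0 ->
  (forall t t', t <= t' -> P t' <= P t - (t' - t) * a) ->
  (forall t t', t <= t' -> P t - (t' - t) * b <= P t') ->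
  Lub_Rbar (fun t => 0 <= t /\ 0 <= P t) = Finite x <-> P x = 0.
Proof.
  intros Ha Hb HP0 Hdec Hlip. set (T := fun t => 0 <= t /\ 0 <= P t). split.
  - intros H. destruct (Lub_Rbar_correct T) as [Hub Hlub]. rewrite H in Hub, Hlub.
    assert (Hx : 0 <= x) by (apply (Hub 0); split; lra).
    destruct (Rtotal_order (P x) 0) as [h|[h|h]]; auto; exfalso.
    + set (d := - P x / (2 * (b + 1))).
      assert (Hd : 0 < d) by (unfold d; apply Rdiv_lt_0_compat; lra).
      assert (Hdb : d * (b + 1) = - P x / 2) by (unfold d; field; lra).
      assert (x <= x - d); [|lra]. apply (Hlub (Finite (x - d))).
      intros t [Ht0 Htp]. simpl. destruct (Rle_dec t (x - d)) as [r|r]; auto. exfalso.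
      destruct (Rle_dec x t) as [r2|r2].
      * pose proof (Hdec x t r2). nra.
      * pose proof (Hlip t x ltac:(lra)). nra.
    + set (d := P x / (2 * (b + 1))).
      assert (Hd : 0 < d) by (unfold d; apply Rdiv_lt_0_compat; lra).
      assert (Hdb : d * (b + 1) = P x / 2) by (unfold d; field; lra).
      pose proof (Hlip x (x + d) ltac:(lra)).
      assert (T (x + d)) by (split; [lra|nra]).
      specialize (Hub _ H1). simpl in Hub. lra.
  - intros H. apply is_lub_Rbar_unique. split.
    + intros t [Ht0 Htp]. simpl. destruct (Rle_dec t x) as [r|r]; auto. exfalso.
      pose proof (Hdec x t ltac:(lra)). nra.
    + intros u Hu. apply Hu. split; [|lra].
      destruct (Rle_dec 0 x) as [r|r]; auto. exfalso.
      pose proof (Hdec x 0 ltac:(lra)). nra.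
Qed.

Lemma ln_Rpower x y : 0 < x -> ln (Rpower x y) = y * ln x.
Proof. intros _. unfold Rpower. apply ln_exp. Qed.

Lemma exp_le x y : x <= y -> exp x <= exp y.
Proof. intros [h|h]; [left; apply exp_increasing; auto|rewrite h; lra]. Qed.

Lemma exp_INR_mult n x : exp (INR n * x) = exp x ^ n.
Proof.
  induction n as [|n IH]; [simpl; rewrite Rmult_0_l; apply exp_0|].
  rewrite S_INR, Rmult_plus_distr_r, Rmult_1_l, exp_plus, IH. simpl. ring.
Qed.

Lemma exists_letter_bound (f : nat -> R) m : exists B, 1 <= B /\ forall i, (i < m)%nat -> f i <= B.
Proof.
  induction m as [|m [B [HB Hf]]]; [exists 1; split; [lra|intros; lia]|].
  exists (Rmax B (f m)). split; [eapply Rle_trans; [apply HB|apply Rmax_l]|].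
  intros i Hi. destruct (Nat.eq_dec i m) as [->|Hne]; [apply Rmax_r|].
  eapply Rle_trans; [apply Hf; lia|apply Rmax_l].
Qed.

Lemma opnorm_word_le_pow m A :
  exists L, 1 <= L /\ forall n w, is_word m n w -> opnorm (matw A w) <= L ^ n.
Proof.
  destruct (exists_letter_bound (fun i => opnorm (A i)) m) as [L [HL Hi]].
  exists L. split; auto. intros n w [Hlen Hw]. subst n.
  induction Hw as [|i w Hi' _ IH]; simpl.
  - rewrite opnorm_mid. lra.
  - eapply Rle_trans; [apply opnorm_mmul_le|].
    apply Rmult_le_compat; auto using opnorm_ge_0.
Qed.

Section Pressure.
Variables (m : nat) (A : nat -> mat2).

Definition partition (n : nat) (t : R) : R :=
  sum_words m n (fun w => Rpower (opnorm (matw A w)) (- t)).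

Definition pressure (t : R) : R := real (Lim_seq (fun n => / INR n * ln (partition n t))).

Variables (c lam kq : R).
Hypotheses (Hm : (0 < m)%nat) (Hdet : forall i, (i < m)%nat -> det2 (A i) = 1)
  (Hc : 0 < c) (Hlam : 1 < lam)
  (Hgrowth : forall n w, (1 <= n)%nat -> is_word m n w -> opnorm (matw A w) >= c * lam ^ n)
  (Hkq : 0 < kq <= 1)
  (Hquasi : forall n k u v, is_word m n u -> is_word m k v ->
     kq * (opnorm (matw A u) * opnorm (matw A v)) <= opnorm (matw A (u ++ v))).

Lemma partition_pos n t : 0 < partition n t.
Proof. apply sum_words_pos; auto. intros; apply exp_pos. Qed.

Lemma ln_partition_almost_additive t n k :
  Rabs (ln (partition (n + k) t) - ln (partition n t) - ln (partition k t)) <= Rabs t * - ln kq.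
Proof.
  replace (ln (partition (n + k) t) - ln (partition n t) - ln (partition k t))
    with (ln (partition (n + k) t) - (ln (partition n t) + ln (partition k t))) by ring.
  rewrite <- ln_mult by apply partition_pos.
  unfold partition. rewrite sum_words_app, sum_words_mult.
  apply ln_sum_words_close; auto. intros u Hu.
  pose proof (opnorm_word_pos m A n u Hdet Hu) as Hnu.
  split; [apply sum_words_pos; auto; intros; apply exp_pos|].
  split; [apply sum_words_pos; auto; intros; apply Rmult_lt_0_compat; apply exp_pos|].
  apply ln_sum_words_close; auto. intros v Hv.
  pose proof (opnorm_word_pos m A k v Hdet Hv) as Hnv.
  pose proof (Hquasi n k u v Hu Hv) as Hlo.
  pose proof (opnorm_mmul_le (matw A u) (matw A v)) as Hhi. rewrite <- matw_app in Hhi.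
  assert (Hprod : 0 < kq * (opnorm (matw A u) * opnorm (matw A v)))
    by (repeat apply Rmult_lt_0_compat; lra).
  assert (Huv : 0 < opnorm (matw A (u ++ v))) by lra.
  repeat split; try apply exp_pos; [apply Rmult_lt_0_compat; apply exp_pos|].
  rewrite ln_mult, !ln_Rpower by (auto; apply exp_pos).
  replace (- t * ln (opnorm (matw A (u ++ v)))
           - (- t * ln (opnorm (matw A u)) + - t * ln (opnorm (matw A v))))
    with (- t * (ln (opnorm (matw A (u ++ v))) - ln (opnorm (matw A u) * opnorm (matw A v))))
    by (rewrite ln_mult by auto; ring).
  rewrite Rabs_mult, Rabs_Ropp. apply Rmult_le_compat_l; [apply Rabs_pos|].
  apply ln_le in Hlo; auto. apply ln_le in Hhi; auto.
  rewrite (ln_mult kq) in Hlo by nra. apply Rabs_le. lra.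
Qed.

Lemma ln_partition_linear t : forall n, (1 <= n)%nat ->
  Rabs (ln (partition n t) - INR n * pressure t) <= Rabs t * - ln kq.
Proof.
  assert (He : 0 <= Rabs t * - ln kq).
  { apply Rmult_le_pos; [apply Rabs_pos|].
    assert (ln kq <= ln 1) by (apply ln_le; lra). rewrite ln_1 in H. lra. }
  destruct (almost_additive_linear (fun n => ln (partition n t)) _ He) as [P HP].
  { intros n k _ _. apply ln_partition_almost_additive. }
  replace (pressure t) with P; auto.
  unfold pressure. rewrite (is_lim_seq_unique _ _ (is_lim_seq_avg_of_linear _ _ _ HP)). auto.
Qed.

Lemma pressure_growth_le t t' d K :
  (forall n w, (1 <= n)%nat -> is_word m n w ->
     - t * ln (opnorm (matw A w)) <= - t' * ln (opnorm (matw A w)) + INR n * d + K) ->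
  pressure t <= pressure t' + d.
Proof.
  intros H. apply (linear_growth_le _ _ _ _ _ _ _ K (ln_partition_linear t) (ln_partition_linear t')).
  intros n Hn. unfold partition. rewrite Rplus_assoc.
  apply ln_sum_words_le; auto. intros w Hw. pose proof (opnorm_word_pos m A n w Hdet Hw).
  rewrite !ln_Rpower by auto. repeat split; try apply exp_pos. specialize (H n w Hn Hw). lra.
Qed.

Lemma pressure_decrease t t' : t <= t' -> pressure t' <= pressure t - (t' - t) * ln lam.
Proof.
  intros Ht. enough (pressure t' <= pressure t + - (t' - t) * ln lam) by lra.
  apply (pressure_growth_le _ _ _ (- (t' - t) * ln c)). intros n w Hn Hw.
  pose proof (Hgrowth n w Hn Hw). pose proof (pow_lt lam n ltac:(lra)).
  assert (Hln : ln (c * lam ^ n) <= ln (opnorm (matw A w))) by (apply ln_le; nra).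
  rewrite ln_mult, ln_pow in Hln by lra.
  assert (0 <= (t' - t) * (ln (opnorm (matw A w)) - (ln c + INR n * ln lam)))
    by (apply Rmult_le_pos; lra).
  lra.
Qed.

Lemma pressure_decrease_bounded : exists b, 0 <= b /\
  forall t t', t <= t' -> pressure t - (t' - t) * b <= pressure t'.
Proof.
  destruct (opnorm_word_le_pow m A) as [L [HL HLn]].
  exists (ln L). split; [rewrite <- ln_1; apply ln_le; lra|].
  intros t t' Ht. enough (pressure t <= pressure t' + (t' - t) * ln L) by lra.
  apply (pressure_growth_le _ _ _ 0). intros n w Hn Hw.
  pose proof (opnorm_word_pos m A n w Hdet Hw). pose proof (HLn n w Hw).
  assert (ln (opnorm (matw A w)) <= INR n * ln L) by (rewrite <- ln_pow by lra; apply ln_le; auto).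
  assert (0 <= (t' - t) * (INR n * ln L - ln (opnorm (matw A w)))) by (apply Rmult_le_pos; lra).
  lra.
Qed.

Lemma pressure_0_nonneg : 0 <= pressure 0.
Proof.
  assert (Hm1 : 1 <= INR m) by (apply (le_INR 1); lia).
  apply Rle_trans with (ln (INR m)); [rewrite <- ln_1; apply ln_le; lra|].
  rewrite <- (Rplus_0_r (pressure 0)).
  apply (linear_growth_le (fun n => INR n * ln (INR m)) (fun n => ln (partition n 0))
           (ln (INR m)) (pressure 0) 0 (Rabs 0 * - ln kq) 0 0).
  - intros n _. rewrite Rminus_diag, Rabs_R0. lra.
  - apply ln_partition_linear.
  - intros n _. unfold partition. rewrite (sum_words_ext m n _ (fun _ => 1)), sum_words_const.
    + rewrite Rmult_1_r, ln_pow by lra. lra.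
    + intros w Hw. rewrite Ropp_0. apply Rpower_O. apply (opnorm_word_pos m A n w Hdet Hw).
Qed.

Lemma partition_series_diverges_iff t : ~ ex_series (fun n => partition (S n) t) <-> 0 <= pressure t.
Proof.
  set (e := Rabs t * - ln kq).
  assert (Hb : forall n, exp (- e + INR (S n) * pressure t) <= partition (S n) t <=
                         exp (e + INR (S n) * pressure t)).
  { intros n. pose proof (ln_partition_linear t (S n) ltac:(lia)) as H.
    fold e in H. apply Rabs_le_between in H.
    rewrite <- (exp_ln (partition (S n) t)) by apply partition_pos.
    split; apply exp_le; lra. }
  split.
  - intros Hdiv. destruct (Rle_dec 0 (pressure t)) as [h|h]; auto. exfalso. apply Hdiv.
    set (q := exp (pressure t)).
    assert (Hq : 0 < q < 1) by (split; [apply exp_pos|rewrite <- exp_0; apply exp_increasing; lra]).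
    apply (@ex_series_le R_AbsRing R_CompleteNormedModule _ (fun n => exp (e + pressure t) * q ^ n)).
    + intros n. change (norm (partition (S n) t)) with (Rabs (partition (S n) t)).
      rewrite Rabs_right by (left; apply partition_pos).
      eapply Rle_trans; [apply Hb|]. unfold q. rewrite <- exp_INR_mult, <- exp_plus.
      apply exp_le. rewrite S_INR. lra.
    + apply (ex_series_ext (fun n => scal (exp (e + pressure t)) (q ^ n))); [reflexivity|].
      apply (@ex_series_scal_l R_AbsRing R_NormedModule), ex_series_geom.
      rewrite Rabs_right; lra.
  - intros H Hconv. apply ex_series_lim_0 in Hconv.
    assert (Hle : forall n, exp (- e) <= partition (S n) t).
    { intros n. eapply Rle_trans; [|apply Hb]. apply exp_le.
      pose proof (pos_INR (S n)). nra. }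
    pose proof (is_lim_seq_le _ _ _ _ Hle (is_lim_seq_const _) Hconv). simpl in H0.
    pose proof (exp_pos (- e)). lra.
Qed.

Lemma crit_exp_eq_iff x : crit_exp m A = Finite x <-> pressure x = 0.
Proof.
  destruct pressure_decrease_bounded as [b [Hb Hslow]].
  assert (Hlam' : 0 < ln lam) by (rewrite <- ln_1; apply ln_increasing; lra).
  replace (crit_exp m A) with (Lub_Rbar (fun t => 0 <= t /\ 0 <= pressure t)).
  - apply (Lub_Rbar_nonneg_zero pressure (ln lam) b); auto using pressure_0_nonneg, pressure_decrease.
  - apply Lub_Rbar_eqset. intros t. rewrite <- partition_series_diverges_iff. reflexivity.
Qed.

End Pressure.

Lemma supnorm_le (U : R -> Prop) (g : R -> R) b : (exists x, closure_set U x) ->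
  (forall x, closure_set U x -> Rabs (g x) <= b) -> supnorm U g <= b.
Proof.
  intros [x0 Hx0] Hb. apply Lub_Rbar_real_le; [exists (Rabs (g x0)), x0; auto|].
  intros y [x [Hx ->]]. auto.
Qed.

Section UniformCone.
Variables (m : nat) (A : nat -> mat2) (U : R -> Prop) (ka : R).
Hypotheses (Hm : (0 < m)%nat) (Hdet : forall i, (i < m)%nat -> det2 (A i) = 1) (HU : multicone U)
  (Hinv : strictly_invariant m A U) (Hka : 0 < ka <= 1)
  (Hcone : forall n w x, is_word m n w -> closure_set U x ->
     ka * opnorm (matw A w) <= image_norm (matw A w) x).

Lemma bounded_distortion : exists C, 1 < C /\
  forall n w x y, is_word m n w -> closure_set U x -> closure_set U y ->
    / C <= Rabs (dcirc (phiw A w) x) / Rabs (dcirc (phiw A w) y) <= C.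
Proof.
  exists (2 / ka ^ 2). split.
  { apply Rmult_lt_reg_r with (ka ^ 2); [nra|]. field_simplify; nra. }
  intros n w x y Hw Hx Hy. rewrite !(dcirc_phiw m A n) by auto.
  pose proof (image_norm_word_pos m A n w x Hdet Hw).
  pose proof (image_norm_word_pos m A n w y Hdet Hw).
  pose proof (Hcone n w x Hw Hx). pose proof (Hcone n w y Hw Hy).
  pose proof (image_norm_le_opnorm (matw A w) x). pose proof (image_norm_le_opnorm (matw A w) y).
  set (a := image_norm (matw A w) x) in *. set (b := image_norm (matw A w) y) in *.
  set (N := opnorm (matw A w)) in *.
  rewrite !Rabs_right by (left; apply Rinv_0_lt_compat; nra).
  replace (/ a ^ 2 / / b ^ 2) with ((b / a) ^ 2) by (field; lra).
  assert (Hr : ka <= b / a <= / ka).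
  { split; [apply Rmult_le_reg_r with a|apply Rmult_le_reg_r with (ka * a)]; try nra;
      unfold Rdiv; [rewrite Rmult_assoc, Rinv_l|replace (/ ka * (ka * a)) with a by (field; lra);
      replace (b * / a * (ka * a)) with (ka * b) by (field; lra)]; nra. }
  assert (Hk2 : ka ^ 2 <= (b / a) ^ 2 <= (/ ka) ^ 2) by (split; apply pow_incr; nra).
  rewrite pow_inv in Hk2. split.
  - apply Rle_trans with (ka ^ 2); [|lra].
    replace (/ (2 / ka ^ 2)) with (ka ^ 2 / 2) by (field; nra). nra.
  - apply Rle_trans with (/ ka ^ 2); [lra|]. unfold Rdiv.
    assert (0 < / ka ^ 2) by (apply Rinv_0_lt_compat; nra). lra.
Qed.

Lemma dcirc_phiw_le n w x : is_word m n w -> closure_set U x ->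
  Rabs (dcirc (phiw A w) x) <= / (ka * opnorm (matw A w)) ^ 2.
Proof.
  intros Hw Hx. rewrite (dcirc_phiw m A n) by auto.
  pose proof (image_norm_word_pos m A n w x Hdet Hw).
  assert (0 < ka * opnorm (matw A w)) by (pose proof (opnorm_word_pos m A n w Hdet Hw); nra).
  rewrite Rabs_right by (left; apply Rinv_0_lt_compat; nra).
  apply Rinv_le_contravar; [apply pow_lt; lra|]. apply pow_incr. split; [lra|]. eauto.
Qed.

Lemma supnorm_dcirc_bounds n w : is_word m n w ->
  / opnorm (matw A w) ^ 2 <= supnorm U (dcirc (phiw A w)) <= / (ka * opnorm (matw A w)) ^ 2.
Proof.
  intros Hw. destruct (multicone_closure_inhabited U HU) as [x0 Hx0]. split.
  - eapply Rle_trans; [|apply (Lub_Rbar_real_ge _ (/ (ka * opnorm (matw A w)) ^ 2)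
                                 (Rabs (dcirc (phiw A w) x0)))].
    + rewrite (dcirc_phiw m A n) by auto.
      pose proof (image_norm_word_pos m A n w x0 Hdet Hw).
      rewrite Rabs_right by (left; apply Rinv_0_lt_compat; nra).
      apply Rinv_le_contravar; [nra|]. apply pow_incr. split; [nra|]. apply image_norm_le_opnorm.
    + exists x0. auto.
    + intros y [x [Hx ->]]. apply (dcirc_phiw_le n); auto.
  - apply supnorm_le; eauto. intros x Hx. apply (dcirc_phiw_le n); auto.
Qed.

Lemma opnorm_quasi_multiplicative n k u v : is_word m n u -> is_word m k v ->
  ka ^ 2 * (opnorm (matw A u) * opnorm (matw A v)) <= opnorm (matw A (u ++ v)).
Proof.
  intros Hu Hv. destruct (multicone_closure_inhabited U HU) as [x0 Hx0].
  eapply Rle_trans; [|apply (image_norm_le_opnorm _ x0)].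
  rewrite matw_app, (image_norm_mmul _ _ _ _ (is_angle_map_phiw A v)).
  assert (Hy : closure_set U (phiw A v x0)) by (apply (closure_phiw m A U Hinv); auto; apply Hv).
  pose proof (Hcone _ _ _ Hu Hy). pose proof (Hcone _ _ _ Hv Hx0).
  pose proof (opnorm_word_pos m A n u Hdet Hu). pose proof (opnorm_word_pos m A k v Hdet Hv).
  replace (ka ^ 2 * (opnorm (matw A u) * opnorm (matw A v)))
    with ((ka * opnorm (matw A u)) * (ka * opnorm (matw A v))) by ring.
  apply Rmult_le_compat; auto; nra.
Qed.

Lemma pressure_zero_iff s : pressure_zero m A U s <-> pressure m A (2 * s) = 0.
Proof.
  assert (Hka2 : 0 < ka ^ 2 <= 1) by (split; nra).
  set (e := Rabs s * - ln (ka ^ 2)).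
  set (S := fun n => sum_words m n (fun w => Rpower (supnorm U (dcirc (phiw A w))) s)).
  assert (Hclose : forall n, Rabs (ln (S n) - ln (partition m A n (2 * s))) <= e).
  { intros n. apply ln_sum_words_close; auto. intros w Hw.
    destruct (supnorm_dcirc_bounds n w Hw) as [Hlo Hhi].
    pose proof (opnorm_word_pos m A n w Hdet Hw) as Hnu.
    assert (Hsup : 0 < supnorm U (dcirc (phiw A w))).
    { eapply Rlt_le_trans; [|apply Hlo]. apply Rinv_0_lt_compat, pow_lt. lra. }
    repeat split; try apply exp_pos. rewrite !ln_Rpower by auto.
    apply ln_le in Hlo; [|apply Rinv_0_lt_compat, pow_lt; lra].
    apply ln_le in Hhi; auto.
    rewrite ln_Rinv, ln_pow in Hlo by (try apply pow_lt; lra).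
    rewrite ln_Rinv, Rpow_mult_distr, ln_mult, !ln_pow in Hhi by (try apply pow_lt; nra).
    replace (s * ln (supnorm U (dcirc (phiw A w))) - - (2 * s) * ln (opnorm (matw A w)))
      with (s * (ln (supnorm U (dcirc (phiw A w))) + INR 2 * ln (opnorm (matw A w))))
      by (simpl; ring).
    assert (ln ka <= 0) by (rewrite <- ln_1; apply ln_le; lra).
    unfold e. rewrite Rabs_mult, ln_pow by lra.
    apply Rmult_le_compat_l; [apply Rabs_pos|]. apply Rabs_le. lra. }
  assert (Hlim : is_lim_seq (fun n => / INR n * ln (S n)) (pressure m A (2 * s))).
  { apply (is_lim_seq_avg_of_linear _ _ (e + Rabs (2 * s) * - ln (ka ^ 2))). intros n Hn.
    pose proof (Hclose n) as H1. pose proof (ln_partition_linear m A (ka ^ 2) Hm Hdet Hka2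
                                               opnorm_quasi_multiplicative (2 * s) n Hn) as H2.
    apply Rabs_le_between in H1. apply Rabs_le_between in H2. apply Rabs_le. lra. }
  unfold pressure_zero. fold S. split.
  - intros H. assert (E : Finite (pressure m A (2 * s)) = Finite 0).
    { rewrite <- (is_lim_seq_unique _ _ H), <- (is_lim_seq_unique _ _ Hlim). reflexivity. }
    injection E. auto.
  - intros H. rewrite <- H. exact Hlim.
Qed.

Lemma dcirc_phiw_decay c lam : 0 < c -> 1 < lam ->
  (forall n w, (1 <= n)%nat -> is_word m n w -> opnorm (matw A w) >= c * lam ^ n) ->
  forall n w x, is_word m n w -> closure_set U x ->
    Rabs (dcirc (phiw A w) x) <= / (ka * Rmin c 1) ^ 2 * / lam ^ (2 * n).
Proof.
  intros Hc Hlam Hgrowth n w x Hw Hx.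
  assert (Hcm : 0 < Rmin c 1 <= 1) by (split; [apply Rmin_pos; lra|apply Rmin_r]).
  assert (Hl : 0 < lam ^ n) by (apply pow_lt; lra).
  assert (Hnu : Rmin c 1 * lam ^ n <= opnorm (matw A w)).
  { destruct n as [|n].
    - destruct Hw as [Hlen _]. destruct w; [|discriminate]. simpl. rewrite opnorm_mid. lra.
    - pose proof (Hgrowth (S n) w ltac:(lia) Hw). pose proof (Rmin_l c 1). nra. }
  eapply Rle_trans; [apply (dcirc_phiw_le n w x Hw Hx)|].
  assert (Hk : 0 < ka * Rmin c 1) by nra.
  replace (/ (ka * Rmin c 1) ^ 2 * / lam ^ (2 * n)) with (/ (ka * Rmin c 1 * lam ^ n) ^ 2)
    by (rewrite Nat.mul_comm, pow_mult; field; repeat split; apply Rgt_not_eq; lra).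
  apply Rinv_le_contravar; [apply pow_lt; nra|]. apply pow_incr. split; [nra|].
  rewrite Rmult_assoc. apply Rmult_le_compat_l; lra.
Qed.

End UniformCone.

Lemma eventually_small (C lam : R) : 1 < lam ->
  exists K, forall k, (K <= k)%nat -> C * / lam ^ (2 * k) < 1.
Proof.
  intros Hlam. destruct (Pow_x_infinity lam ltac:(rewrite Rabs_right; lra) (Rabs C + 1)) as [K HK].
  exists K. intros k Hk. specialize (HK k Hk).
  rewrite Rabs_right in HK by (left; apply pow_lt; lra).
  assert (lam ^ k <= lam ^ (2 * k)) by (apply Rle_pow; lia || lra).
  pose proof (Rle_abs C). apply Rmult_lt_reg_r with (lam ^ (2 * k)); [apply pow_lt; lra|].
  rewrite Rmult_assoc, Rinv_l by (apply pow_nonzero; lra). lra.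
Qed.

Theorem lemma3p4 (m : nat) (A : nat -> mat2) (U : R -> Prop) (c lam : R) :
  (0 < m)%nat ->
  (forall i, (i < m)%nat -> det2 (A i) = 1) ->
  multicone U ->
  strictly_invariant m A U ->
  0 < c -> 1 < lam ->
  (forall n w, (1 <= n)%nat -> is_word m n w -> opnorm (matw A w) >= c * lam ^ n) ->
  (* (i) bounded distortion *)
  (exists C', 1 < C' /\
     forall n w x y, is_word m n w -> closure_set U x -> closure_set U y ->
       / C' <= Rabs (dcirc (phiw A w) x) / Rabs (dcirc (phiw A w) y) <= C') /\
  (* (ii) exponential decay of derivatives, and eventual contraction *)
  (exists C'', 0 < C'' /\
     forall n w, is_word m n w -> supnorm U (dcirc (phiw A w)) <= C'' * / lam ^ (2 * n)) /\
  (exists K, forall k w x, (K <= k)%nat -> is_word m k w -> closure_set U x ->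
       Rabs (dcirc (phiw A w) x) < 1) /\
  (* (iii) the zero of the pressure is s_A / 2 *)
  (forall s, pressure_zero m A U s <-> crit_exp m A = Finite (2 * s)).
Proof.
  intros Hm Hdet HU Hinv Hc Hlam Hgrowth.
  destruct (image_norm_uniform m A U Hdet HU Hinv) as [ka [Hka Hcone]].
  set (C := / (ka * Rmin c 1) ^ 2).
  assert (HC : 0 < C) by (apply Rinv_0_lt_compat, pow_lt, Rmult_lt_0_compat; [lra|apply Rmin_pos; lra]).
  assert (Hdecay : forall n w x, is_word m n w -> closure_set U x ->
            Rabs (dcirc (phiw A w) x) <= C * / lam ^ (2 * n))
    by (intros; eapply dcirc_phiw_decay; eauto).
  assert (Hka2 : 0 < ka ^ 2 <= 1) by (split; nra).
  assert (Hquasi := opnorm_quasi_multiplicative m A U ka Hdet HU Hinv Hka Hcone).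
  split; [apply (bounded_distortion m A U ka); auto|].
  split.
  { exists C. split; auto. intros n w Hw.
    apply supnorm_le; [apply multicone_closure_inhabited; auto|]. intros x Hx. eauto. }
  split.
  { destruct (eventually_small C lam Hlam) as [K HK]. exists K. intros k w x Hk Hw Hx.
    eapply Rle_lt_trans; eauto. }
  intros s. rewrite (pressure_zero_iff m A U ka), (crit_exp_eq_iff m A c lam (ka ^ 2)) by auto.
  split; auto.
Qed.
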